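(* Let $\mathbb{F}_q$ be a finite field with $q\neq 2$ and let $\mathcal{M}=\mathbb{F}_q\times\mathbb{F}_q^{*}\times\mathbb{F}_q$ with the relation: $(x_1,y_1,z_1)$ and $(x_2,y_2,z_2)$ commute iff $x_1y_2-y_1x_2=z_1-z_2$. Then $\omega(\mathcal{M})\ge 2q$.
   Context: $\omega(\mathcal{M})$ is the maximum cardinality of a subset of $\mathcal{M}$ no two distinct elements of which commute. *)

From mathcomp Require Import all_boot all_algebra all_field.
Set Implicit Arguments. Unset Strict Implicit. Unset Printing Implicit Defensive.
Import GRing.Theory.
Local Open Scope ring_scope.

(* Elements (x,y,z) of F_q x F_q x F_q are encoded as ((x, y), z). *)
Definition Mset (F : finFieldType) : {set F * F * F} :=
  [set a : F * F * F | a.1.2 != 0].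

Definition mcommute (F : finFieldType) (a b : F * F * F) : bool :=
  a.1.1 * b.1.2 - a.1.2 * b.1.1 == a.2 - b.2.

Definition noncommuting (F : finFieldType) (S : {set F * F * F}) : bool :=
  (S \subset Mset F) &&
  [forall a in S, forall b in S, (a != b) ==> ~~ mcommute a b].

Definition omegaM (F : finFieldType) : nat :=
  \max_(S : {set F * F * F} | noncommuting S) #|S|.

From mathcomp Require Import all_boot all_algebra all_field.
From mathcomp Require Import ring.
Set Implicit Arguments. Unset Strict Implicit. Unset Printing Implicit Defensive.
Import GRing.Theory.
Local Open Scope ring_scope.

(* Pick c outside {0, 1} (possible as q <> 2) and take the 2q points (x, 1, c x) and
   (x, c, x - 1).  Two points of the first family commute iff (1 - c)(x - x') = 0,
   two of the second iff (c - 1)(x - x') = 0, and a point of each never commutes since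
   the commutation equation reduces to 1 = 0. *)

Lemma finField_exists_neq01 (F : finFieldType) :
  (#|F| != 2)%N -> exists c : F, (c != 0) && (c != 1).
Proof.
move=> hq; case: (pickP (fun c : F => (c != 0) && (c != 1))) => [c Hc|none01].
  by exists c.
suff : #|F| = #|[set (0 : F); 1]|.
  by rewrite cards2 eq_sym oner_neq0 => /eqP; rewrite (negbTE hq).
apply: eq_card => x; rewrite !inE.
by move/negbT: (none01 x); rewrite negb_and !negbK => /orP[] ->; rewrite ?orbT.
Qed.

Lemma mcommute_refl (F : finFieldType) (a : F * F * F) : mcommute a a.
Proof. by rewrite /mcommute mulrC !subrr. Qed.

Lemma leq_omegaM (F : finFieldType) (S : {set F * F * F}) :
  noncommuting S -> (#|S| <= omegaM F)%N.
Proof. exact: leq_bigmax_cond. Qed.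

Section TwoLines.

Variables (F : finFieldType) (c : F).
Hypotheses (c_neq0 : c != 0) (c_neq1 : c != 1).

Definition two_lines_pt (u : F + F) : F * F * F :=
  match u with
  | inl x => (x, 1, c * x)
  | inr x => (x, c, x - 1)
  end.

Lemma two_lines_pt_in_Mset u : two_lines_pt u \in Mset F.
Proof. by rewrite inE; case: u => x /=; rewrite ?oner_eq0. Qed.

Lemma mcommute_two_lines_pt u v :
  mcommute (two_lines_pt u) (two_lines_pt v) -> u = v.
Proof.
rewrite /mcommute; case: u v => x [] y /= /eqP e.
- have : (1 - c) * (x - y) = (x * 1 - 1 * y) - (c * x - c * y) by ring.
  rewrite e subrr => /eqP.
  by rewrite mulf_eq0 !subr_eq0 eq_sym (negbTE c_neq1) => /eqP ->.
- have : 1 = (c * x - (y - 1)) - (x * c - 1 * y) :> F by ring.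
  by rewrite e subrr => /eqP; rewrite oner_eq0.
- have : 1 = (x * 1 - c * y) - ((x - 1) - c * y) :> F by ring.
  by rewrite e subrr => /eqP; rewrite oner_eq0.
- have : (c - 1) * (x - y) = (x * c - c * y) - ((x - 1) - (y - 1)) by ring.
  rewrite e subrr => /eqP.
  by rewrite mulf_eq0 !subr_eq0 (negbTE c_neq1) => /eqP ->.
Qed.

Lemma two_lines_pt_inj : injective two_lines_pt.
Proof.
by move=> u v euv; apply: mcommute_two_lines_pt; rewrite euv mcommute_refl.
Qed.

Definition two_lines : {set F * F * F} := two_lines_pt @: [set: F + F].

Lemma card_two_lines : #|two_lines| = (2 * #|F|)%N.
Proof.
by rewrite card_imset ?cardsT ?card_sum ?mul2n ?addnn //; exact: two_lines_pt_inj.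
Qed.

Lemma noncommuting_two_lines : noncommuting two_lines.
Proof.
apply/andP; split.
  by apply/subsetP => a /imsetP[u _ ->]; exact: two_lines_pt_in_Mset.
apply/forallP => a; apply/implyP => /imsetP[u _ ->].
apply/forallP => b; apply/implyP => /imsetP[v _ ->].
apply/implyP => neq_uv; apply/negP => /mcommute_two_lines_pt euv.
by rewrite euv eqxx in neq_uv.
Qed.

End TwoLines.

Local Close Scope ring_scope.

Theorem lemma6p3 (F : finFieldType) (hq : #|F| != 2) :
  2 * #|F| <= omegaM F.
Proof.
have [c /andP[c_neq0 c_neq1]] := finField_exists_neq01 hq.
rewrite -(card_two_lines c_neq1).
exact/leq_omegaM/noncommuting_two_lines.
Qed.
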